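(* ($I\Sigma_1$) If $X\subseteq\mathbb{N}$ is finite, $\omega^3$-large, and $\min X>3$, then $X$ is $\mathsf{fEM}_{<\infty}$-$\omega$-large.
   Context: $\alpha$-largeness for $\alpha<\omega^\omega$: writing ordinals in Cantor normal form, $0[m]=0$, $(\beta+1)[m]=\beta$, $(\beta+\omega^n)[m]=\beta+\omega^{n-1}\cdot m$ for $n\ge1$; a finite $\{x_0<\dots<x_{\ell-1}\}$ is $\alpha$-large if $\alpha[x_0]\cdots[x_{\ell-1}]=0$. A finite set $X$ is \emph{$\mathsf{fEM}_{<\infty}$-$\alpha$-large} if for every coloring $P:[X]^2\to\{0,\dots,\min X-1\}$ there is $Y\subseteq X$ which is $\alpha$-large and such that $P$ is fallow on $[Y]^2$, i.e. $P(x,z)\in\{P(x,y),P(y,z)\}$ for all $x<y<z$ in $Y$. *)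

From mathcomp Require Import all_boot.
Set Implicit Arguments. Unset Strict Implicit. Unset Printing Implicit Defensive.

(* Ordinals below omega^omega in Cantor normal form:
   the list [:: e1; ...; ek] (e1 >= ... >= ek) denotes
   omega^e1 + ... + omega^ek; the empty list denotes 0. *)
Definition cnf := seq nat.

(* Fundamental sequence: 0[m] = 0, (b+1)[m] = b,
   (b + omega^n)[m] = b + omega^(n-1) * m  for n >= 1. *)
Definition fund (a : cnf) (m : nat) : cnf :=
  match a with
  | [::] => [::]
  | e0 :: a' =>
      let b := belast e0 a' in
      let n := last e0 a' in
      if n is n'.+1 then b ++ nseq m n' else b
  end.

(* A finite set {x0 < ... < x_{l-1}} is given as its increasing enumeration s.
   It is a-large iff a[x0]...[x_{l-1}] = 0. *)
Definition large (a : cnf) (s : seq nat) : bool :=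
  foldl fund a s == [::].

Definition omega : cnf := [:: 1].
Definition omega_pow (n : nat) : cnf := [:: n].

Definition fallow (P : nat -> nat -> nat) (Y : seq nat) : Prop :=
  forall x y z, x \in Y -> y \in Y -> z \in Y -> x < y -> y < z ->
    P x z = P x y \/ P x z = P y z.

Definition fEM_large (a : cnf) (X : seq nat) : Prop :=
  forall P : nat -> nat -> nat,
    (forall x y, x \in X -> y \in X -> x < y -> P x y < head 0 X) ->
    exists Y : seq nat, [/\ subseq Y X, large a Y & fallow P Y].

From mathcomp Require Import all_boot zify.
Set Implicit Arguments. Unset Strict Implicit. Unset Printing Implicit Defensive.

(* A set X that is omega^3-large with minimum n is enormous: the rest of X
   must be (omega^2 * n)-large above n, and counting how many elements each
   step of the fundamental sequences of omega^2 * a + omega * b + c consumes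
   gives |X| >= (n+1)^n.  For a colouring with n colours, the greedy
   pigeonhole construction (repeatedly keep the elements whose colour with the
   current minimum is the most frequent one) then produces a min-homogeneous
   set {n < y_1 < ... < y_k} with k >= n.  It is omega-large, and
   min-homogeneity, P(x,z) = P(x,y) for x < y < z, implies fallowness. *)

(* [cnf3 a b c] is omega^2 * a + omega * b + c. *)
Definition cnf3 (a b c : nat) : cnf := nseq a 2 ++ nseq b 1 ++ nseq c 0.

Lemma fund_rcons (s : cnf) e m :
  fund (rcons s e) m = if e is e'.+1 then s ++ nseq m e' else s.
Proof. by case: s => [|e0 s] //=; rewrite belast_rcons last_rcons. Qed.

Lemma rcons_nseq (T : Type) n (x : T) : rcons (nseq n x) x = nseq n.+1 x.
Proof. by elim: n => //= n ->. Qed.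

Lemma fund_cnf3S a b c m : fund (cnf3 a b c.+1) m = cnf3 a b c.
Proof. by rewrite /cnf3 -rcons_nseq -!rcons_cat fund_rcons. Qed.

Lemma fund_cnf3_omega a b m : fund (cnf3 a b.+1 0) m = cnf3 a b m.
Proof. by rewrite /cnf3 -rcons_nseq /= cats0 -rcons_cat fund_rcons catA. Qed.

Lemma fund_cnf3_omega2 a m : fund (cnf3 a.+1 0 0) m = cnf3 a m 0.
Proof. by rewrite /cnf3 -rcons_nseq /= !cats0 fund_rcons. Qed.

Lemma cnf3_eq0 a b c : (cnf3 a b c == [::]) = [&& a == 0, b == 0 & c == 0].
Proof. by case: a; case: b; case: c. Qed.

Lemma foldl_fund_cnf3_finite c s : foldl fund (cnf3 0 0 c) s = cnf3 0 0 (c - size s).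
Proof.
elim: s c => [|x s IHs] c /=; first by rewrite subn0.
by case: c => [|c]; [exact: IHs 0 | rewrite fund_cnf3S IHs].
Qed.

Lemma large_omega_cons x s : x <= size s -> large omega (x :: s).
Proof.
move=> le_x_s; rewrite /large /= -[nseq x 0]/(cnf3 0 0 x).
by rewrite foldl_fund_cnf3_finite cnf3_eq0 subn_eq0 le_x_s.
Qed.

(* [cnf3_len a b c m] is the size of the shortest [cnf3 a b c]-large run of
   consecutive integers starting at [m]; [large_cnf3_size] shows that no
   large set of integers [>= m] is shorter. *)
Fixpoint omega_len (b m : nat) : nat :=
  if b is b'.+1 then (m + omega_len b' (m.+1 + m)).+1 else 0.

Fixpoint omega2_len (a m : nat) : nat :=
  if a is a'.+1 then (omega_len m m.+1 + omega2_len a' (m.+1 + omega_len m m.+1)).+1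
  else 0.

Definition cnf3_len (a b c m : nat) : nat :=
  c + omega_len b (m + c) + omega2_len a (m + c + omega_len b (m + c)).

Lemma leq_omega_len b1 b2 m1 m2 :
  b1 <= b2 -> m1 <= m2 -> omega_len b1 m1 <= omega_len b2 m2.
Proof.
have homo_m b : {homo omega_len b : i j / i <= j}.
  by elim: b => //= b IHb i j le_ij; rewrite ltnS leq_add // IHb // leq_add.
move=> le_b le_m; apply: leq_trans (homo_m _ _ _ le_m) _.
apply: (homo_leq (f := omega_len^~ m2) leqnn leq_trans) => // {}b /=.
by rewrite ltnW // ltnS (leq_trans _ (leq_addl _ _)) // homo_m // leq_addl.
Qed.

Lemma leq_omega2_len a : {homo omega2_len a : m1 m2 / m1 <= m2}.
Proof.
elim: a => //= a IHa m1 m2 le_m; have le_len := leq_omega_len le_m (le_m : m1.+1 <= m2.+1).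
by rewrite ltnS leq_add // IHa // leq_add.
Qed.

Lemma leq_cnf3_len a b1 b2 c1 c2 m1 m2 : b1 <= b2 -> c1 <= c2 -> m1 <= m2 ->
  cnf3_len a b1 c1 m1 <= cnf3_len a b2 c2 m2.
Proof.
move=> le_b le_c le_m; have le_mc : m1 + c1 <= m2 + c2 by rewrite leq_add.
have le_len := leq_omega_len le_b le_mc.
by rewrite /cnf3_len !leq_add // leq_omega2_len // leq_add.
Qed.

Lemma cnf3_lenS a b c m : cnf3_len a b c.+1 m = (cnf3_len a b c m.+1).+1.
Proof. by rewrite /cnf3_len addnS !addSn. Qed.

Lemma cnf3_len_omega a b m : cnf3_len a b.+1 0 m = (cnf3_len a b m m.+1).+1.
Proof. by rewrite /cnf3_len /= !addn0 add0n addnS !addSn addnA. Qed.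

Lemma cnf3_len_omega2 a m : cnf3_len a.+1 0 0 m = (cnf3_len a m 0 m.+1).+1.
Proof. by rewrite /cnf3_len /= !addn0. Qed.

Lemma large_cnf3_size a b c m s : sorted ltn s -> all (leq m) s ->
  foldl fund (cnf3 a b c) s = [::] -> cnf3_len a b c m <= size s.
Proof.
elim: s a b c m => [|x s IHs] a b c m /=.
  by move=> _ _ /eqP; rewrite cnf3_eq0 => /and3P[/eqP-> /eqP-> /eqP->].
move=> sorted_xs /andP[le_m_x _]; have le_mS_xS : m < x.+1 := le_m_x.
have {}IHs := IHs _ _ _ x.+1 (path_sorted sorted_xs) (order_path_min ltn_trans sorted_xs).
case: c => [|c]; [case: b => [|b]; [case: a => [|a] |] |].
- by rewrite /cnf3_len.
- rewrite fund_cnf3_omega2 cnf3_len_omega2 ltnS => /IHs; apply: leq_trans.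
  exact: leq_cnf3_len.
- rewrite fund_cnf3_omega cnf3_len_omega ltnS => /IHs; apply: leq_trans.
  exact: leq_cnf3_len.
- rewrite fund_cnf3S cnf3_lenS ltnS => /IHs; apply: leq_trans.
  exact: leq_cnf3_len.
Qed.

Lemma omega_len_lower b m : m.+1 * 2 ^ b <= omega_len b m + m.+1.
Proof.
elim: b m => [|b IHb] m /=; first by rewrite muln1.
by have := IHb (m.+1 + m); rewrite expnS; nia.
Qed.

Lemma expn_self_le_omega2_len a m : 1 < a -> 0 < m -> m ^ m <= omega2_len a m.
Proof.
case: a => [|[|a]] // _ m_gt0.
set l := m.+1 + omega_len m m.+1.
have le_l_len2 : omega_len l l.+1 <= omega2_len a.+2 m by rewrite /= -/l; lia.
have le_mm_l : m * m <= l.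
  by have := omega_len_lower m m.+1; have := expn_gt0 2 m; have := ltn_expl m (isT : 1 < 2); nia.
have le_exp_len : 2 ^ l <= omega_len l l.+1.
  have l_gt0 : 0 < l by [].
  by have := omega_len_lower l l.+1; have := leq_pexp2l (isT : 0 < 2) l_gt0; nia.
apply: leq_trans le_l_len2; apply: leq_trans le_exp_len.
apply: (@leq_trans ((2 ^ m) ^ m)); first by rewrite leq_exp2r // ltnW // ltn_expl.
by rewrite -expnM leq_pexp2l.
Qed.

Lemma pigeonhole_count (T : Type) (f : T -> nat) n k (s : seq T) :
  all (fun y => f y < n) s -> n * k < size s ->
  exists2 c, c < n & k < count (fun y => f y == c) s.
Proof.
elim: n s => [|n IHn] s f_lt lt_s; first by case: s f_lt lt_s => //= y s; rewrite ltn0.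
have [lt_k_n | le_n_k] := ltnP k (count (fun y => f y == n) s); first by exists n.
have [|| c c_lt lt_k_c] := IHn (filter (predC (fun y => f y == n)) s).
- rewrite all_filter; apply: sub_all f_lt => y /=.
  by rewrite ltnS leq_eqVlt; case: eqP.
- by rewrite size_filter; have := count_predC (fun y => f y == n) s; lia.
exists c; first exact: ltnW.
by apply: leq_trans lt_k_c _; rewrite count_filter; apply: sub_count => y /andP[].
Qed.

Definition min_homogeneous (P : nat -> nat -> nat) (Y : seq nat) : Prop :=
  forall x y z, x \in Y -> y \in Y -> z \in Y -> x < y -> y < z -> P x z = P x y.

Lemma min_homogeneous_fallow P Y : min_homogeneous P Y -> fallow P Y.
Proof. by move=> homY x y z xY yY zY lt_xy lt_yz; left; apply: homY. Qed.

Lemma min_homogeneous_cons P x Y c :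
  (forall y, y \in Y -> x < y /\ P x y = c) -> min_homogeneous P Y ->
  min_homogeneous P (x :: Y).
Proof.
move=> x_Y homY a b d aS bS dS lt_ab lt_bd.
have memY y : y \in x :: Y -> x < y -> y \in Y.
  by rewrite inE => /predU1P[-> | //]; rewrite ltnn.
case/predU1P: aS lt_ab => [-> | aY] lt_ab.
  have bY := memY b bS lt_ab; have dY := memY d dS (ltn_trans lt_ab lt_bd).
  by rewrite (x_Y b bY).2 (x_Y d dY).2.
have lt_xb := ltn_trans (x_Y a aY).1 lt_ab.
by apply: homY => //; [exact: memY | exact: memY d dS (ltn_trans lt_xb lt_bd)].
Qed.

Lemma exists_min_homogeneous P n k x T : 0 < n -> sorted ltn (x :: T) ->
  {in x :: T &, forall y z, y < z -> P y z < n} -> n.+1 ^ k <= size (x :: T) ->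
  exists Y, [/\ subseq Y T, k <= size Y & min_homogeneous P (x :: Y)].
Proof.
move=> n_gt0; elim: k x T => [|k IHk] x T sorted_xT P_lt size_xT.
  by exists [::]; split; rewrite ?sub0seq //; apply: (@min_homogeneous_cons _ _ _ 0).
have x_lt_T : all (ltn x) T := order_path_min ltn_trans sorted_xT.
have [|| c _ big_c] := @pigeonhole_count _ (P x) n (n.+1 ^ k).-1 T.
- apply/allP => y yT; apply: P_lt; rewrite ?inE ?eqxx ?yT ?orbT //.
  exact: (allP x_lt_T).
- by move: size_xT; rewrite expnS /=; have := expn_gt0 n.+1 k; nia.
rewrite -size_filter in big_c.
case def_T' : (filter (fun y => P x y == c) T) big_c => [|y T'] //= size_T'.
have sub_T' : subseq (y :: T') T by rewrite -def_T' filter_subseq.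
have T'_colour z : z \in y :: T' -> z \in T /\ P x z = c.
  by rewrite -def_T' mem_filter => /andP[/eqP].
have T'_sub z : z \in y :: T' -> z \in x :: T.
  by case/T'_colour => zT _; rewrite inE zT orbT.
have [|z1 z2 z1T' z2T'|| Y [sub_Y size_Y homY]] := IHk y T'.
- by rewrite -def_T'; apply: (sorted_filter ltn_trans); apply: path_sorted sorted_xT.
- by apply: P_lt; apply: T'_sub.
- by rewrite /=; have := expn_gt0 n.+1 k; lia.
have sub_yY : subseq (y :: Y) (y :: T') by rewrite /= eqxx.
exists (y :: Y); split => //; first exact: subseq_trans sub_yY sub_T'.
apply: (min_homogeneous_cons (c := c)) => // z /(mem_subseq sub_yY)/T'_colour[zT ->].
by split => //; apply: (allP x_lt_T).
Qed.

Theorem mainTheorem14 (X : seq nat) :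
  sorted ltn X -> large (omega_pow 3) X -> 3 < head 0 X -> fEM_large omega X.
Proof.
case: X => [|n s] //= sorted_X large_X n_gt3 P P_lt.
have n_gt1 : 1 < n := ltn_trans (isT : 1 < 3) n_gt3.
have large_s : foldl fund (cnf3 n 0 0) s = [::].
  by apply/eqP; rewrite /cnf3 cats0.
have := large_cnf3_size (path_sorted sorted_X) (order_path_min ltn_trans sorted_X) large_s.
rewrite /cnf3_len /= !addn0 add0n => size_s.
have size_X : n.+1 ^ n <= size (n :: s).
  apply: leq_trans (leq_pexp2l _ (leqnSn n)) _ => //.
  exact: leq_trans (expn_self_le_omega2_len n_gt1 _) (leq_trans size_s _).
have [Y [sub_Y size_Y homY]] := exists_min_homogeneous (ltnW n_gt1) sorted_X P_lt size_X.
exists (n :: Y); split.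
- by rewrite /= eqxx.
- exact: large_omega_cons.
- exact: min_homogeneous_fallow.
Qed.
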